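(* For each integer $l \ge 2$ let $f_l(z) = \sum_{n\ge1}\gamma_l(n)q^n$ be a weight-$l$ CM newform (in $S_l(\Gamma_0(32))$ if $l$ is even, in $S_l(\Gamma_0(4),(\frac{-4}{\cdot}))$ if $l \equiv 1 \pmod 4$, in $S_l(\Gamma_0(16),(\frac{-4}{\cdot}))$ if $l \equiv 3 \pmod 4$) whose coefficients at odd primes $p$ are $$\gamma_l(p) = \begin{cases} (-1)^{\frac{(x+y-1)(l-1)}{2}}\left[(x+iy)^{l-1} + (x-iy)^{l-1}\right], & p \equiv 1 \pmod 4,\ p = x^2+y^2,\ x \text{ odd},\\ 0, & p \equiv 3 \pmod 4.\end{cases}$$ Let $k \ge 2$ be an integer. Then for every odd prime $p$ and every integer $m \geq 1$, $$\gamma_k(p)^m = \sum_{t=0}^{\lfloor \frac{m-1}{2}\rfloor}\binom{m}{t} p^{t(k-1)}\gamma_{(m-2t)(k-1)+1}(p) + \begin{cases}\binom{m}{m/2} p^{\frac m2 (k-1)}, & p \equiv 1 \pmod 4 \text{ and } m \text{ even},\\ 0, & \text{otherwise}.\end{cases}$$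
   Context: $q = e^{2\pi i z}$; $(\frac{-4}{\cdot})$ is the nontrivial Dirichlet character modulo $4$. A CM newform is a newform $\sum\gamma(n)q^n$ with $\gamma(p) = \psi(p)\gamma(p)$ for all primes $p$ in a set of density one, for some nontrivial real Dirichlet character $\psi$. (Such newforms $f_l$ exist for every $l \ge 2$.) *)

From HB Require Import structures.
From mathcomp Require Import all_boot all_order all_algebra all_field.
Set Implicit Arguments. Unset Strict Implicit. Unset Printing Implicit Defensive.
Import Order.TTheory GRing.Theory Num.Theory.
Local Open Scope ring_scope.

Definition cm_coef (l : nat) (x y : int) : algC :=
  (-1) ^ (((x + y - 1) %/ 2)%Z * (l.-1)%:Z) *
  (((x%:~R + 'i * y%:~R) ^+ l.-1) + ((x%:~R - 'i * y%:~R) ^+ l.-1)).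

From HB Require Import structures.
From mathcomp Require Import all_boot all_order all_algebra all_field.
From mathcomp Require Import zify ring.
Import Order.TTheory GRing.Theory Num.Theory.
Local Open Scope ring_scope.

(* For p = 1 (mod 4), a square root of -1 in F_p and Thue's pigeonhole argument
   write p = x^2 + y^2 with x odd. With alpha = +-(x + iy), signed as in the
   definition of gamma, one gets gamma_l(p) = alpha^(l-1) + conj(alpha)^(l-1)
   and alpha conj(alpha) = p, so the identity is the binomial expansion of
   (alpha^(k-1) + conj(alpha)^(k-1))^m with the terms t and m - t grouped
   together. For p = 3 (mod 4) both sides vanish. *)

(* The nonzero elements are the 4q roots of X^(4q) - 1, so some x is not a root
   of X^(2q) - 1; then x^(2q) is a square root of 1 other than 1. *)
Lemma finField_sqrtN1_exists (F : finFieldType) : (#|F| %% 4 = 1)%N ->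
  exists i : F, i ^+ 2 = -1.
Proof.
move=> F4; set q := (#|F| %/ 4)%N.
have cardF : #|F| = (q * 4).+1 by rewrite (divn_eq #|F| 4) F4 addn1.
have q_gt0 : (0 < q)%N by have := finNzRing_gt1 F; rewrite cardF; lia.
have /exists_inP[x x0 xq] : [exists x in predC1 (0 : F), x ^+ (q * 2) != 1].
  apply: contraT => /exists_inPn all_roots.
  suff: (q * 4 <= q * 2)%N by lia.
  have := @max_unity_roots F (q * 2) (enum (predC1 0)).
  rewrite muln_gt0 q_gt0 enum_uniq -cardE cardC1 cardF; apply=> //.
  by apply/allP=> y; rewrite mem_enum unity_rootE => /all_roots /negPn.
have x4q : x ^+ (q * 4) = 1.
  by apply: (mulfI x0); rewrite -exprS -cardF expf_card mulr1.
exists (x ^+ q); rewrite -exprM; apply/eqP.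
have : (x ^+ (q * 2)) ^+ 2 == 1 by rewrite -exprM -mulnA x4q.
by rewrite sqrf_eq1 (negPf xq).
Qed.

Lemma exists_sqrn_le_ltS n : exists s, (s ^ 2 <= n < s.+1 ^ 2)%N.
Proof.
elim: n => [|n [s /andP[le_s lt_s]]]; first by exists 0%N.
have [lt_n|le_n] := ltnP n.+1 (s.+1 ^ 2); first by exists s; rewrite lt_n andbT ltnW.
by exists s.+1; rewrite le_n; lia.
Qed.

Lemma natr_sqr_distn (R : comPzRingType) (m n : nat) :
  (`|m - n|%N%:R : R) ^+ 2 = (m%:R - n%:R) ^+ 2.
Proof.
have [le_nm|lt_mn] := leqP n m; first by rewrite distnEl // natrB //; ring.
by rewrite distnEr ?natrB 1?ltnW //; ring.
Qed.

(* Thue: two of the (s + 1)^2 > p values u - i v, 0 <= u, v <= s, coincide. *)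
Lemma sum_two_sqr_of_sqrtN1 {p} : prime p -> (exists i : 'F_p, i ^+ 2 = -1) ->
  exists a b : nat, p = (a ^ 2 + b ^ 2)%N.
Proof.
move=> pr_p [i i2]; have [s /andP[le_s lt_s]] := exists_sqrn_le_ltS p.
have {le_s} lt_s' : (s ^ 2 < p)%N.
  rewrite ltn_neqAle le_s andbT; apply/eqP => def_p.
  by have := pfactorK 1 pr_p; rewrite expn1 -{2}def_p lognX; lia.
pose f (uv : 'I_s.+1 * 'I_s.+1) : 'F_p := uv.1%:R - i * uv.2%:R.
have /injectivePn[[u1 v1] [[u2 v2] neq_uv eq_f]] : ~~ injectiveb f.
  apply/injectiveP => /leq_card; rewrite card_Fp // card_prod card_ord; lia.
exists `|u1 - u2|%N, `|v1 - v2|%N; set n := (_ + _)%N.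
have p_dvd_n : (p %| n)%N.
  rewrite (dvdn_pcharf (pchar_Fp pr_p)) natrD !natrX !natr_sqr_distn.
  have -> : u1%:R - u2%:R = i * (v1%:R - v2%:R) :> 'F_p.
    apply/eqP; rewrite -subr_eq0; apply/eqP.
    by transitivity (f (u1, v1) - f (u2, v2)); [rewrite /f /=; ring | rewrite eq_f subrr].
  by rewrite exprMn i2 mulN1r addNr.
have n_gt0 : (0 < n)%N.
  by move: neq_uv; rewrite xpair_eqE negb_and -!val_eqE /= /n; lia.
have dist_le (a b : 'I_s.+1) : (`|a - b| ^ 2 <= s ^ 2)%N.
  by rewrite leq_exp2r //; have := ltn_ord a; have := ltn_ord b; lia.
have lt_n : (n < 2 * p)%N.
  by have := dist_le u1 u2; have := dist_le v1 v2; rewrite /n; lia.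
by case/dvdnP: p_dvd_n lt_n n_gt0 => [[|[|k]] ->]; lia.
Qed.

Lemma prime_1mod4_sum_two_sqr {p} : prime p -> (p %% 4 = 1)%N ->
  exists a b : nat, odd a /\ p = (a ^ 2 + b ^ 2)%N.
Proof.
move=> pr_p p4; have odd_p : odd p by lia.
have [a [b def_p]] : exists a b : nat, p = (a ^ 2 + b ^ 2)%N.
  by apply: sum_two_sqr_of_sqrtN1 => //; apply: finField_sqrtN1_exists; rewrite card_Fp.
have [odd_a|even_a] := boolP (odd a); first by exists a, b.
exists b, a; rewrite addnC; split=> //.
by move: odd_p; rewrite def_p oddD !oddX (negPf even_a).
Qed.

Lemma exprDn_paired (R : comPzRingType) (a b : R) m : (0 < m)%N ->
  (a + b) ^+ m =
    \sum_(0 <= t < ((m.-1)./2).+1)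
       'C(m, t)%:R * (a * b) ^+ t * (a ^+ (m - 2 * t) + b ^+ (m - 2 * t))
    + (if ~~ odd m then 'C(m, m./2)%:R * (a * b) ^+ m./2 else 0).
Proof.
move=> m_gt0; set h := ((m.-1)./2).+1.
have h_le : (h <= m.+1 - h)%N by rewrite /h; lia.
rewrite exprDn -(big_mkord xpredT (fun i => a ^+ (m - i) * b ^+ i *+ 'C(m, i))).
under eq_bigr do rewrite -mulr_natl.
rewrite [LHS](@big_cat_nat _ _ _ h) //=; last by lia.
rewrite [X in _ + X = _](@big_cat_nat _ _ _ (m.+1 - h) h) //=; last by lia.
have tail_rev (G : nat -> R) :
    \sum_(m.+1 - h <= i < m.+1) G i = \sum_(0 <= t < h) G (m - t)%N.
  rewrite -[X in \sum_(X <= _ < _) _]add0n big_addn subKn; last by lia.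
  rewrite big_nat_rev; apply: eq_big_nat => t /andP[_ lt_th]; congr G; lia.
rewrite tail_rev [X in _ + X]addrC addrA -big_split /=; congr (_ + _).
  apply: eq_big_nat => t /andP[_ lt_th].
  have le_2t : (2 * t <= m)%N by rewrite /h in lt_th; lia.
  rewrite bin_sub ?subKn; [|lia|lia].
  have -> : (m - t = t + (m - 2 * t))%N by lia.
  by rewrite !exprD exprMn; ring.
have [odd_m|even_m] /= := boolP (odd m).
  by rewrite big_geq // /h; lia.
have -> : (m.+1 - h = h.+1)%N by rewrite /h; lia.
have -> : h = m./2 by rewrite /h; lia.
by rewrite big_nat1 exprMn (_ : m - m./2 = m./2)%N //; lia.
Qed.

Section CMRoot.
Variables x y : int.

Let sign : algC := (-1) ^ ((x + y - 1) %/ 2)%Z.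

Definition cm_root : algC := sign * (x%:~R + 'i * y%:~R).

Lemma conj_cm_root : cm_root^* = sign * (x%:~R - 'i * y%:~R).
Proof.
have sign_real : sign \is Num.real by rewrite rpredXz ?rpredN ?rpred1.
by rewrite rmorphM /= conj_Creal // conjC_rect ?realz.
Qed.

Lemma cm_coefE l : cm_coef l x y = cm_root ^+ l.-1 + cm_root^* ^+ l.-1.
Proof. by rewrite conj_cm_root /cm_coef -exprz_exp !exprMn mulrDr. Qed.

Lemma cm_root_mulC : cm_root * cm_root^* = (x ^+ 2 + y ^+ 2)%:~R.
Proof.
rewrite conj_cm_root mulrACA -expfzMl mulrNN mulr1 exp1rz mul1r.
by rewrite mulrC -subr_sqr exprMn sqrCi mulN1r opprK rmorphD !rmorphXn.
Qed.
End CMRoot.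

Theorem corollary4p2 (gamma : nat -> nat -> algC)
  (Hg1 : forall (l p : nat) (x y : int), (2 <= l)%N -> prime p -> (p %% 4 = 1)%N ->
           p%:Z = x ^+ 2 + y ^+ 2 -> ~~ (2 %| x)%Z -> gamma l p = cm_coef l x y)
  (Hg3 : forall (l p : nat), (2 <= l)%N -> prime p -> (p %% 4 = 3)%N -> gamma l p = 0)
  (k : nat) (hk : (2 <= k)%N) (p : nat) (hp : prime p) (hpodd : odd p)
  (m : nat) (hm : (1 <= m)%N) :
  gamma k p ^+ m =
    \sum_(0 <= t < ((m.-1)./2).+1)
       'C(m, t)%:R * p%:R ^+ (t * k.-1) * gamma ((m - 2 * t) * k.-1 + 1)%N p
    + (if (p %% 4 == 1)%N && ~~ odd m
       then 'C(m, m./2)%:R * p%:R ^+ (m./2 * k.-1) else 0).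
Proof.
have weight_ge2 t : (t < ((m.-1)./2).+1)%N -> (2 <= (m - 2 * t) * k.-1 + 1)%N.
  move=> lt_t; rewrite addn1 ltnS muln_gt0; apply/andP; split; lia.
have [p4|p4] := eqVneq (p %% 4)%N 1%N; last first.
  have p3 : (p %% 4 = 3)%N by lia.
  rewrite Hg3 // expr0n gtn_eqF //= addr0 big1_seq // => t.
  by rewrite mem_index_iota => /andP[_ /weight_ge2 ?]; rewrite Hg3 ?mulr0.
have [a [b [odd_a def_p]]] := prime_1mod4_sum_two_sqr hp p4.
have p_sum : p%:Z = a%:Z ^+ 2 + b%:Z ^+ 2 by rewrite def_p -!natz natrD !natrX.
set z := cm_root a b.
have gammaE l : (2 <= l)%N -> gamma l p = z ^+ l.-1 + z^* ^+ l.-1.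
  by move=> le2l; rewrite (Hg1 l p a b) ?cm_coefE // dvdzE dvdn2 negbK.
have zzC : z * z^* = p%:R by rewrite cm_root_mulC -p_sum.
rewrite gammaE // exprDn_paired //=; congr (_ + _).
  apply: eq_big_nat => t /andP[_ lt_t]; rewrite gammaE ?weight_ge2 // addn1 /=.
  by rewrite -exprMn zzC -!exprM !(mulnC k.-1).
by case: (odd m); rewrite //= -exprMn zzC -exprM mulnC.
Qed.
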